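(* Let $N$ be a perfect planar network in an annulus, drawn (after an isotopy) so that no internal vertex lies on the cut $\rho$, and let $\bar w_e=w_e\lambda^{\mathrm{ind}(e)}$ be the modified edge weights, so that $w_P=(-1)^{c(C_P)-1}\prod_{e\in P}\bar w_e$ for every path $P$ between boundary vertices. Regard each boundary measurement $M(i,j)$, for a source $b_i$ and a sink $b_j$, as the formal power series $\sum_P w_P$ in the commuting indeterminates $\bar w_e$, $e\in E$, with integer coefficients, the sum over all paths $P$ from $b_i$ to $b_j$. Then each boundary measurement is a rational function of the modified weights $\bar w_e$, $e\in E$ (i.e. the formal series equals the expansion of a rational function with integer coefficients).
   Context: A perfect planar network in an annulus $N=(G,\rho,w)$ consists of the following data. $G=(V,E)$ is a directed graph embedded in an annulus, considered up to isotopy relative to the boundary. Exactly $n$ of its vertices lie on the boundary circles (boundary vertices): $n_1\ge 0$ on the outer circle and $n_2=n-n_1\ge 0$ on the inner circle. Each boundary vertex is either a source (exactly one outgoing edge, no incoming edges) or a sink (exactly one incoming edge, no outgoing edges). Every internal vertex has degree $3$ and is either white (exactly one incoming edge) or black (exactly one outgoing edge). A cut $\rho$ is an oriented non-self-intersecting curve from a base point on the inner circle to a base point on the outer circle, both base points distinct from the boundary vertices, considered up to isotopy relative to its endpoints. For an oriented curve $\gamma$ with endpoints off $\rho$, $\mathrm{ind}(\gamma)$ denotes the algebraic intersection number of $\gamma$ with $\rho$. Each edge $e$ carries a weight $w_e$. A path is a sequence of edges $(e_1,\dots,e_r)$ with $e_i=(v_i,v_{i+1})$; edges may repeat. For a closed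 piecewise smooth curve $C$ without cusps, the concordance number $c(C)\in\mathbb Z/2\mathbb Z$ is its rotation number mod 2 (equivalently: approximate $C$ by a closed polygon, fix a generic oriented line $l$, and count mod 2 the pairs of consecutive segments $(e',e'')$ such that the direction vector of $l$ lies in the interior of the cone spanned by $e',e''$). For a path $P$ from a source $b'$ to a sink $b''$, $C_P$ is the closed curve obtained by appending to $P$: if $b',b''$ lie on the same circle, the counterclockwise arc of that circle from $b''$ to $b'$; otherwise, the curve going from $b''$ counterclockwise along its circle to the base point of $\rho$, then along $\rho$ to the other base point, then counterclockwise along the other circle to $b'$. The weight of $P$ is $w_P(\lambda)=(-1)^{c(C_P)-1}\lambda^{\mathrm{ind}(P)}\prod_{e\in P}w_e$ (product with multiplicity), $\lambda$ an independent variable. The boundary measurement $M(i,j)$ is the sum of $w_P$ over all paths from $b_i$ to $b_j$. *)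

(* Perfect planar networks in an annulus, drawn polygonally
   in the plane R^2 over an arbitrary real field R. *)
From HB Require Import structures.
From mathcomp Require Import all_boot all_order all_algebra.
Set Implicit Arguments. Unset Strict Implicit. Unset Printing Implicit Defensive.
Import Order.TTheory GRing.Theory Num.Theory.
Local Open Scope ring_scope.

Section Geometry.
Variable R : realFieldType.

Definition pt := (R * R)%type.
Definition pt0 : pt := (0, 0).
Definition psub (p q : pt) : pt := (p.1 - q.1, p.2 - q.2).
Definition cross (u v : pt) : R := u.1 * v.2 - u.2 * v.1.

Definition on_seg (p q z : pt) : Prop :=
  exists2 t : R, 0 <= t <= 1 &
    z = (p.1 + t * (q.1 - p.1), p.2 + t * (q.2 - p.2)).

(* the annulus: the region between the concentric squares of half-sides
   1 (inner boundary circle) and 2 (outer boundary circle) *)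
Definition ninf (p : pt) : R := Num.max `|p.1| `|p.2|.
Definition in_annulus (p : pt) : bool := (1 <= ninf p) && (ninf p <= 2).
Definition in_open_annulus (p : pt) : bool := (1 < ninf p) && (ninf p < 2).
Definition on_inner (p : pt) : bool := ninf p == 1.
Definition on_outer (p : pt) : bool := ninf p == 2.

Definition on_polyline (s : seq pt) (z : pt) : Prop :=
  exists2 k : nat, (k.+1 < size s)%N & on_seg (nth pt0 s k) (nth pt0 s k.+1) z.

(* non-self-intersecting polygonal line (possibly closed, i.e. a simple
   loop when its first and last points coincide) *)
Definition simple_polyline (s : seq pt) : Prop :=
  (1 < size s)%N /\
  (forall k, (k.+1 < size s)%N -> nth pt0 s k != nth pt0 s k.+1) /\
  (forall k l z, (k < l)%N -> (l.+1 < size s)%N ->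
     on_seg (nth pt0 s k) (nth pt0 s k.+1) z ->
     on_seg (nth pt0 s l) (nth pt0 s l.+1) z ->
     (l = k.+1 /\ z = nth pt0 s l) \/
     [/\ k = 0%N, l.+2 = size s, nth pt0 s 0 = last pt0 s & z = nth pt0 s 0]).

(* counterclockwise boundary parameter of a point of the square of
   half-side r, with values in [0, 8r) *)
Definition par (r : R) (p : pt) : R :=
  if (p.1 == r) && (p.2 < r) then p.2 + r
  else if (p.2 == r) && (- r < p.1) then 2 * r + (r - p.1)
  else if (p.1 == - r) && (- r < p.2) then 4 * r + (r - p.2)
  else 6 * r + (p.1 + r).

Definition corners (r : R) : seq pt := [:: (r, - r); (r, r); (- r, r); (- r, - r)].

(* the corners met strictly between a and b when going counterclockwise
   along the square of half-side r from a to b *)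
Definition arc_pts (r : R) (a b : pt) : seq pt :=
  let ta := par r a in let tb := par r b in
  if ta < tb then [seq c <- corners r | (ta < par r c) && (par r c < tb)]
  else [seq c <- corners r | ta < par r c] ++ [seq c <- corners r | par r c < tb].

(* concordance number of a closed polygon (cyclic list of corners) w.r.t.
   an oriented line with direction vector d: the number mod 2 of pairs of
   consecutive segments (e', e'') such that d lies in the interior of the
   cone spanned by e' and e''.  For u, v not collinear this interior is
   { a u + b v | a, b > 0 }, i.e. cross u d and cross d v have the sign of
   cross u v; for collinear u, v the cone has empty interior. *)
Definition in_cone (u v d : pt) : bool :=
  (0 < cross u d * cross u v) && (0 < cross d v * cross u v).

Definition pdir (c : seq pt) (i : nat) : pt :=
  psub (nth pt0 c (i.+1 %% size c)) (nth pt0 c (i %% size c)).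

Definition concordance (d : pt) (c : seq pt) : bool :=
  odd (count (fun i => in_cone (pdir c i) (pdir c i.+1) d) (iota 0 (size c))).

Definition generic_for (d : pt) (s : seq pt) : Prop :=
  forall k, (k.+1 < size s)%N -> cross d (psub (nth pt0 s k.+1) (nth pt0 s k)) != 0.

End Geometry.

Record network (R : realFieldType) (V E : finType) := Network {
  src : E -> V;
  tgt : E -> V;
  pos : V -> pt R;
  route : E -> seq (pt R);   (* interior bend points of the drawn edge *)
  white : V -> bool;
  cut : seq (pt R)           (* the cut rho, inner base point -> outer base point *)
}.

Section Network.
Variables (R : realFieldType) (V E : finType) (N : network R V E).

Definition edge_curve (e : E) : seq (pt R) :=
  pos N (src N e) :: rcons (route N e) (pos N (tgt N e)).

Definition is_bdry (v : V) : bool := on_inner (pos N v) || on_outer (pos N v).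
Definition indeg (v : V) : nat := #|[set e | tgt N e == v]|.
Definition outdeg (v : V) : nat := #|[set e | src N e == v]|.
Definition is_source (v : V) : Prop := is_bdry v /\ outdeg v = 1%N /\ indeg v = 0%N.
Definition is_sink (v : V) : Prop := is_bdry v /\ indeg v = 1%N /\ outdeg v = 0%N.

Definition base_in : pt R := head (pt0 R) (cut N).
Definition base_out : pt R := last (pt0 R) (cut N).

Definition perfect_network : Prop :=
  injective (pos N) /\
  (forall v, in_annulus (pos N v)) /\
  (forall v, is_bdry v -> is_source v \/ is_sink v) /\
  (forall v, ~~ is_bdry v ->
     (indeg v + outdeg v = 3)%N /\
     (white N v -> indeg v = 1%N) /\
     (~~ white N v -> outdeg v = 1%N)) /\
  (forall e, simple_polyline (edge_curve e)) /\
  (forall e z, on_polyline (edge_curve e) z ->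
     in_annulus z /\
     (~~ in_open_annulus z -> z = pos N (src N e) \/ z = pos N (tgt N e))) /\
  (forall e f z, e != f -> on_polyline (edge_curve e) z ->
     on_polyline (edge_curve f) z ->
     exists v, z = pos N v /\ ((v == src N e) || (v == tgt N e)) /\
                              ((v == src N f) || (v == tgt N f))) /\
  (forall v e, on_polyline (edge_curve e) (pos N v) ->
     v = src N e \/ v = tgt N e) /\
  simple_polyline (cut N) /\
  on_inner base_in /\ on_outer base_out /\
  (forall z, on_polyline (cut N) z -> z != base_in -> z != base_out ->
     in_open_annulus z) /\
  (forall v, pos N v != base_in /\ pos N v != base_out) /\
  (forall v, ~~ is_bdry v -> ~ on_polyline (cut N) (pos N v)).

(* the direction d of the oriented line l is generic: not parallel to any
   segment of the drawing (edges, cut, and the sides of the squares) *)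
Definition generic_dir (d : pt R) : Prop :=
  [/\ d.1 != 0, d.2 != 0, (forall e, generic_for d (edge_curve e))
    & generic_for d (cut N)].

Fixpoint walk (u : V) (s : seq E) (w : V) : bool :=
  if s is e :: s' then (src N e == u) && walk (tgt N e) s' w else u == w.
Definition is_path (s : seq E) (u w : V) : bool := (s != [::]) && walk u s w.

Definition path_pts (s : seq E) (w : V) : seq (pt R) :=
  flatten [seq pos N (src N e) :: route N e | e <- s] ++ [:: pos N w].

Definition closing_pts (u w : V) : seq (pt R) :=
  let a := pos N w in let b := pos N u in
  if on_inner a == on_inner b then
    arc_pts (if on_inner a then 1 else 2) a b
  else if on_inner a then
    arc_pts 1 a base_in ++ cut N ++ arc_pts 2 base_out b
  else
    arc_pts 2 a base_out ++ rev (cut N) ++ arc_pts 1 base_in b.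

Definition CP (s : seq E) (u w : V) : seq (pt R) := path_pts s w ++ closing_pts u w.

(* (-1)^(c(C_P) - 1) *)
Definition path_sign (d : pt R) (s : seq E) (u w : V) : int :=
  if concordance d (CP s u w) then 1 else -1.

End Network.

Section Series.
Variable E : finType.

Definition mono := {ffun E -> nat}.
Definition mono0 : mono := [ffun => 0%N].
Definition degm (m : mono) : nat := (\sum_e m e)%N.
Definition mult (s : seq E) : mono := [ffun e => count_mem e s].

Definition series := mono -> int.

Definition series_mul (q S : series) : series := fun m =>
  \sum_(a : {ffun E -> 'I_(degm m).+1} | [forall e, (a e <= m e)%N])
     q [ffun e => nat_of_ord (a e)] * S [ffun e => (m e - a e)%N].

Definition finsupp (f : series) : Prop :=
  exists n : nat, forall m, (n < degm m)%N -> f m = 0.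

Definition rational_series (S : series) : Prop :=
  exists p q : series, [/\ finsupp p, finsupp q, q mono0 != 0 &
                           forall m, series_mul q S m = p m].
End Series.

Definition bmeas (R : realFieldType) (V E : finType) (N : network R V E)
  (d : pt R) (u w : V) : series E := fun m =>
  \sum_(P : (degm m).-tuple E | is_path N P u w && (mult P == m))
     path_sign N d P u w.

From HB Require Import structures.
From mathcomp Require Import all_boot all_order all_algebra zify.
From mathcomp Require boolp.
Set Implicit Arguments. Unset Strict Implicit. Unset Printing Implicit Defensive.
Import Order.TTheory GRing.Theory Num.Theory.
Local Open Scope ring_scope.

(* The concordance number c(C_P) counts mod 2 the "turns" at the triples of
   consecutive corners of the polygon C_P, and every such triple lies inside
   one drawn edge, at the junction of two consecutive edges of P, or next to
   the closing curve.  Hence the sign of P = (e_1, ..., e_r) factors as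
   start(e_1) trans(e_1,e_2) ... trans(e_(r-1),e_r) stop(e_r), with trans
   also recording adjacency.  For such transfer-matrix weights, the series
   G_e of the words starting with e solve G = b + M G with polynomial M, b
   and M without constant term, so Cramer's rule writes det(1 - M) * M(u,w)
   as a polynomial, while det(1 - M) has constant term 1.  The file develops,
   in this order: the ring of integer power series in the variables E,
   polynomials and constant terms, such linear systems, series of weighted
   words, the local decomposition of concordance numbers, and the theorem.
   The factorization holds for every drawing. *)

Lemma big_bij (R : Type) (idx : R) (op : Monoid.com_law idx) (I J : finType)
    (P : pred I) (Q : pred J) (F : I -> R) (G : J -> R) (h : J -> I) (h' : I -> J) :
  (forall i, P i -> Q (h' i) /\ h (h' i) = i) ->
  (forall j, Q j -> [/\ P (h j), h' (h j) = j & F (h j) = G j]) ->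
  \big[op/idx]_(i | P i) F i = \big[op/idx]_(j | Q j) G j.
Proof.
move=> hPQ hQP; rewrite (reindex_onto h h') => [|i Pi]; last by case: (hPQ i Pi).
apply: eq_big => [j|j /andP[Pj /eqP hj]].
  apply/andP/idP => [[Pj /eqP <-]|Qj]; first by case: (hPQ _ Pj).
  by case: (hQP j Qj) => -> ->.
by have [] := hQP j; [rewrite -hj; case: (hPQ _ Pj) | ].
Qed.
Arguments big_bij {R idx op I J P Q F G} h h'.

(* Sums over the monomials satisfying a predicate P (typically: lying below a
   given monomial), computed inside a finite box of exponents; the box size
   does not matter as long as it contains all monomials satisfying P. *)
Section MonomialSums.
Variables (E : finType) (V : nmodType).
Local Notation mono := (mono E).

Definition mle (a m : mono) : bool := [forall e, (a e <= m e)%N].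
Definition madd (a b : mono) : mono := [ffun e => (a e + b e)%N].
Definition msub (m a : mono) : mono := [ffun e => (m e - a e)%N].

Definition boxm n (a : {ffun E -> 'I_n}) : mono := [ffun e => nat_of_ord (a e)].
Definition tobox n (m : mono) : {ffun E -> 'I_n.+1} := [ffun e => inord (m e)].

Definition msum n (P : pred mono) (F : mono -> V) : V :=
  \sum_(a : {ffun E -> 'I_n.+1} | P (boxm a)) F (boxm a).

Definition bounded n (P : pred mono) : Prop := forall m, P m -> forall e, (m e <= n)%N.

Lemma mleP (a m : mono) : reflect (forall e, a e <= m e)%N (mle a m).
Proof. exact: forallP. Qed.

Lemma bounded_mle n (m : mono) :
  (forall e, m e <= n)%N -> bounded n [pred a | mle a m].
Proof. by move=> Hm a /mleP Ha e; exact: leq_trans (Ha e) (Hm e). Qed.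

Lemma mono_le_deg (m : mono) e : (m e <= degm m)%N.
Proof. by rewrite /degm (bigD1 e) //= leq_addr. Qed.

Lemma mle_refl (m : mono) : mle m m.
Proof. by apply/mleP. Qed.

Lemma msub_mle (m a : mono) : mle (msub m a) m.
Proof. by apply/mleP => e; rewrite ffunE leq_subr. Qed.

Lemma msubK (m a : mono) : mle a m -> msub m (msub m a) = a.
Proof. by move=> /mleP Ha; apply/ffunP => e; rewrite !ffunE subKn. Qed.

Lemma msub0 (m : mono) : msub m (mono0 E) = m.
Proof. by apply/ffunP => e; rewrite !ffunE subn0. Qed.

Lemma boxmK n (m : mono) : (forall e, m e <= n)%N -> boxm (tobox n m) = m.
Proof. by move=> Hm; apply/ffunP => e; rewrite !ffunE inordK // ltnS. Qed.

Lemma toboxK n (a : {ffun E -> 'I_n.+1}) : tobox n (boxm a) = a.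
Proof. by apply/ffunP => e; rewrite !ffunE inord_val. Qed.

Lemma msum_reindex n n' (P Q : pred mono) (F G : mono -> V) (h h' : mono -> mono) :
  bounded n P -> bounded n' Q ->
  (forall a, P a -> Q (h a) /\ h' (h a) = a) ->
  (forall b, Q b -> [/\ P (h' b), h (h' b) = b & F (h' b) = G b]) ->
  msum n P F = msum n' Q G.
Proof.
move=> bP bQ hPQ hQP; rewrite /msum.
apply: (big_bij (fun b => tobox n (h' (boxm b))) (fun a => tobox n' (h (boxm a)))).
- move=> a Pa; have [Qa ha] := hPQ _ Pa.
  by rewrite boxmK ?ha ?toboxK //; exact: bQ.
- move=> b Qb; have [Pb hb Fb] := hQP _ Qb.
  by rewrite boxmK ?hb ?toboxK //; exact: bP.
Qed.

Lemma msum_bound n n' (P : pred mono) (F : mono -> V) :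
  bounded n P -> bounded n' P -> msum n P F = msum n' P F.
Proof. by move=> bP bP'; apply: (msum_reindex (h := id) (h' := id)). Qed.

Lemma msum_single n (P : pred mono) (F : mono -> V) (a0 : mono) :
  bounded n P -> P a0 -> (forall a, P a -> a != a0 -> F a = 0) ->
  msum n P F = F a0.
Proof.
move=> bP Pa0 F0; have a0K : boxm (tobox n a0) = a0 by rewrite boxmK //; exact: bP.
rewrite /msum (bigD1 (tobox n a0)) /= a0K //.
rewrite big1 ?addr0 // => a /andP[Pa na]; apply: F0 => //.
by apply: contraNneq na => <-; rewrite toboxK.
Qed.

End MonomialSums.

(* The series E -> int with the pointwise sum and the Cauchy product
   series_mul form a commutative ring (equality of series is extensional,
   so the classical eq/choice structures are used). *)
Section PowerSeries.
Variable E : finType.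
Local Notation mono := (mono E).
Local Notation series := (series E).

HB.instance Definition _ := boolp.gen_eqMixin series.
HB.instance Definition _ := boolp.gen_choiceMixin series.

Definition szero : series := fun _ => 0.
Definition sadd (f g : series) : series := fun m => f m + g m.
Definition sopp (f : series) : series := fun m => - f m.

Lemma saddA : associative sadd.
Proof. by move=> f g h; apply: boolp.funext => m; rewrite /sadd addrA. Qed.
Lemma saddC : commutative sadd.
Proof. by move=> f g; apply: boolp.funext => m; rewrite /sadd addrC. Qed.
Lemma sadd0 : left_id szero sadd.
Proof. by move=> f; apply: boolp.funext => m; rewrite /sadd add0r. Qed.
Lemma saddN : left_inverse szero sopp sadd.
Proof. by move=> f; apply: boolp.funext => m; rewrite /sadd addNr. Qed.

HB.instance Definition _ := GRing.isZmodule.Build series saddA saddC sadd0 saddN.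

Lemma series_mulE (f g : series) (m : mono) n : (forall e, m e <= n)%N ->
  series_mul f g m = msum n [pred a | mle a m] (fun a => f a * g (msub m a)).
Proof.
move=> Hm; rewrite -(@msum_bound _ _ (degm m)); last 2 first.
- by apply: bounded_mle => e; exact: mono_le_deg.
- exact: bounded_mle.
apply: eq_big => [a|a _]; first by apply: eq_forallb => e; rewrite ffunE.
by congr (_ * g _); apply/ffunP => e; rewrite !ffunE.
Qed.

Definition sone : series := fun m => (m == mono0 E)%:R.

Lemma smulC : commutative (@series_mul E).
Proof.
move=> f g; apply: boolp.funext => m; rewrite !(series_mulE _ _ (mono_le_deg m)).
apply: (msum_reindex (h := msub m) (h' := msub m)); try exact/bounded_mle/mono_le_deg.
- by move=> a /= Ha; rewrite msub_mle msubK.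
- by move=> b /= Hb; rewrite msub_mle msubK // mulrC.
Qed.

Lemma smul1 : left_id sone (@series_mul E).
Proof.
move=> f; apply: boolp.funext => m; rewrite (series_mulE _ _ (mono_le_deg m)).
rewrite (msum_single (a0 := mono0 E)) /sone ?eqxx ?mul1r ?msub0 //.
- exact/bounded_mle/mono_le_deg.
- by apply/mleP => e; rewrite ffunE.
- by move=> a _ /negbTE ->; rewrite mul0r.
Qed.

Lemma smulDl : left_distributive (@series_mul E) +%R.
Proof.
move=> f g h; apply: boolp.funext => m; rewrite /+%R /= /sadd.
by rewrite /series_mul -big_split; apply: eq_bigr => a _; rewrite mulrDl.
Qed.

Lemma msum_mull n (P : pred mono) (F : mono -> int) (x : int) :
  x * msum n P F = msum n P (fun a => x * F a).
Proof. exact: mulr_sumr. Qed.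

(* (f g) h and f (g h) are both sums over pairs a <= c <= m; the terms are
   matched by c = a + b. *)
Lemma smulA : associative (@series_mul E).
Proof.
move=> f g h; apply: boolp.funext => m; symmetry; set n := degm m.
have Hm e : (m e <= n)%N := mono_le_deg m e.
have bmle (c : mono) : mle c m -> forall e, (c e <= n)%N.
  by move=> /mleP Hc e; exact: leq_trans (Hc e) (Hm e).
rewrite [LHS](series_mulE _ _ Hm) [RHS](series_mulE _ _ Hm).
transitivity (msum n [pred c | mle c m] (fun c =>
    msum n [pred a | mle a c] (fun a => f a * g (msub c a) * h (msub m c)))).
  apply: eq_bigr => c Hc; rewrite (series_mulE _ _ (bmle _ Hc)).
  by rewrite /msum mulr_suml.
transitivity (msum n [pred a | mle a m] (fun a =>
    msum n [pred c | mle c m && mle a c] (fun c => f a * g (msub c a) * h (msub m c)))).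
  rewrite /msum (exchange_big_dep [pred a | mle (boxm a) m]) //=.
  move=> c a /mleP Hc /mleP Ha; apply/mleP => e; exact: leq_trans (Ha e) (Hc e).
apply: eq_bigr => a Ha; rewrite (series_mulE _ _ (bmle _ (msub_mle m (boxm a)))).
rewrite msum_mull; symmetry.
apply: (msum_reindex (h := madd (boxm a)) (h' := fun c => msub c (boxm a))).
- exact/bounded_mle/bmle/msub_mle.
- by move=> c /andP[/bmle].
- move=> b /= /mleP Hb; move/mleP: Ha => Ha; split; last first.
    by apply/ffunP => e; rewrite !ffunE; lia.
  apply/andP; split; apply/mleP => e; have := Hb e; have := Ha e; rewrite !ffunE; lia.
- move=> c /= /andP[/mleP Hc /mleP Hac]; split.
  + by apply/mleP => e; have := Hc e; have := Hac e; rewrite !ffunE; lia.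
  + by apply/ffunP => e; have := Hac e; rewrite !ffunE; lia.
  + rewrite mulrA; congr (_ * g _ * h _); apply/ffunP => e; rewrite !ffunE.
    by have := Hc e; have := Hac e; rewrite ffunE; lia.
Qed.

Lemma sone_neq0 : sone != 0.
Proof.
apply/eqP => /(congr1 (fun f : series => f (mono0 E))).
by rewrite /sone eqxx.
Qed.

HB.instance Definition _ :=
  GRing.Zmodule_isComNzRing.Build series smulA smulC smul1 smulDl sone_neq0.

End PowerSeries.

Section Coefficients.
Variable E : finType.
Local Notation mono := (mono E).
Local Notation series := (series E).

Definition scoef (m : mono) (f : series) : int := f m.

Lemma scoef_is_zmod_morphism m : zmod_morphism (scoef m).
Proof. by []. Qed.
HB.instance Definition _ m :=
  GRing.isZmodMorphism.Build series int (scoef m) (scoef_is_zmod_morphism m).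

Lemma scoefM (f g : series) m : scoef m (f * g) = series_mul f g m.
Proof. by []. Qed.

Lemma scoef1 m : scoef m 1 = (m == mono0 E)%:R.
Proof. by []. Qed.

Lemma scoef_intM (c : int) (f : series) m : scoef m (c%:~R * f) = c * scoef m f.
Proof. by rewrite (mulrzl f c : c%:~R * f = f *~ c) raddfMz -mulrzr intz mulrC. Qed.

Definition const_coef (f : series) : int := f (mono0 E).

Lemma const_coef_is_monoid_morphism : monoid_morphism const_coef.
Proof.
split=> [|f g]; first by rewrite /const_coef -/(scoef _ 1) scoef1 eqxx.
have m0 e : (mono0 E e <= 0)%N by rewrite ffunE.
rewrite /const_coef -[(f * g) _]/(scoef _ (f * g)) scoefM (series_mulE _ _ m0).
rewrite (msum_single (a0 := mono0 E)) ?msub0 //; first exact: bounded_mle.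
  exact: mle_refl.
move=> a /mleP Ha; case/negP; apply/eqP/ffunP => e.
by rewrite ffunE; apply/eqP; rewrite -leqn0; have := Ha e; rewrite ffunE.
Qed.

HB.instance Definition _ := GRing.isZmodMorphism.Build series int const_coef
  (scoef_is_zmod_morphism (mono0 E)).
HB.instance Definition _ :=
  GRing.isMonoidMorphism.Build series int const_coef const_coef_is_monoid_morphism.

End Coefficients.

Section Polynomials.
Variable E : finType.
Local Notation mono := (mono E).
Local Notation series := (series E).

Lemma degm0 : degm (mono0 E) = 0%N.
Proof. by rewrite /degm big1 // => e _; rewrite ffunE. Qed.

Lemma degm_eq0 (m : mono) : degm m = 0%N -> m = mono0 E.
Proof.
by move=> m0; apply/ffunP => e; apply/eqP; rewrite ffunE -leqn0 -m0 mono_le_deg.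
Qed.

Lemma degm_msub (m a : mono) : mle a m -> degm (msub m a) = (degm m - degm a)%N.
Proof.
move=> /mleP Ha; suff: (degm (msub m a) + degm a)%N = degm m by lia.
rewrite /degm -big_split; by apply: eq_bigr => e _; rewrite /= ffunE subnK.
Qed.

Definition polys : {pred series} := fun f => boolp.asbool (finsupp f).

Lemma polysP (f : series) : reflect (finsupp f) (f \in polys).
Proof. exact: boolp.asboolP. Qed.

(* a product of polynomials of degrees <= n1, n2 has degree <= n1 + n2 *)
Lemma polys_subring : subring_closed polys.
Proof.
split.
- apply/polysP; exists 0%N => m m_gt0; rewrite -[LHS]/(scoef m 1) scoef1.
  by case: eqP m_gt0 => // ->; rewrite degm0.
- move=> f g /polysP[n1 f0] /polysP[n2 g0]; apply/polysP; exists (maxn n1 n2).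
  move=> m; rewrite gtn_max => /andP[m1 m2].
  by rewrite -[LHS]/(scoef m _) raddfB /= /scoef f0 ?g0 ?subr0.
- move=> f g /polysP[n1 f0] /polysP[n2 g0]; apply/polysP; exists (n1 + n2)%N.
  move=> m m_big; rewrite -[LHS]/(scoef m _) scoefM (series_mulE _ _ (mono_le_deg m)).
  apply: big1 => a /= a_le.
  case: (leqP (degm (boxm a)) n1) => [a_small|/f0 ->]; last by rewrite mul0r.
  rewrite g0 ?mulr0 // degm_msub // ltn_subRL.
  by apply: leq_ltn_trans m_big; rewrite leq_add2r.
Qed.

HB.instance Definition _ := GRing.isSubringClosed.Build series polys polys_subring.

Definition delta (e : E) : mono := [ffun e' => nat_of_bool (e' == e)].
Definition xvar (e : E) : series := fun m => (m == delta e)%:R.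

Lemma degm_delta e : degm (delta e) = 1%N.
Proof.
rewrite /degm (bigD1 e) //= big1 ?ffunE ?eqxx // => e' /negbTE ne.
by rewrite ffunE ne.
Qed.

Lemma xvar_polys e : xvar e \in polys.
Proof.
apply/polysP; exists 1%N => m m_big; rewrite /xvar; case: eqP m_big => // ->.
by rewrite degm_delta.
Qed.

Lemma const_coef_xvar e : const_coef (xvar e) = 0.
Proof.
rewrite /const_coef /xvar; case: eqP => // /(congr1 (fun m : mono => m e)).
by rewrite !ffunE eqxx.
Qed.

Lemma mle_delta e (m : mono) : mle (delta e) m = (0 < m e)%N.
Proof.
apply/mleP/idP => [/(_ e)|m_pos e']; first by rewrite ffunE eqxx.
by rewrite ffunE; case: eqP => [->|].
Qed.

Lemma scoef_xvarM e (g : series) (m : mono) :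
  scoef m (xvar e * g) = if (0 < m e)%N then scoef (msub m (delta e)) g else 0.
Proof.
rewrite scoefM (series_mulE _ _ (mono_le_deg m)) -mle_delta.
case: ifP => [de_le|de_nle].
  rewrite (msum_single (a0 := delta e)) /xvar ?eqxx ?mul1r //.
    exact/bounded_mle/mono_le_deg.
  by move=> a _ /negbTE ->; rewrite mul0r.
apply: big1 => a /= a_le; rewrite /xvar; case: eqP a_le => [->|_ _]; last by rewrite mul0r.
by rewrite de_nle.
Qed.

End Polynomials.

Section EntriesInSubring.
Variables (R : pzRingType) (S : subringClosed R).

Definition entries_in m n (A : 'M[R]_(m, n)) : Prop := forall i j, A i j \in S.

Lemma mul_entries_in m n p (A : 'M[R]_(m, n)) (B : 'M[R]_(n, p)) :
  entries_in A -> entries_in B -> entries_in (A *m B).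
Proof. by move=> AS BS i j; rewrite mxE rpred_sum // => k _; rewrite rpredM. Qed.

Lemma det_in n (A : 'M[R]_n) : entries_in A -> \det A \in S.
Proof.
move=> AS; apply: rpred_sum => s _; rewrite rpredM ?rpred_sign //.
by apply: rpred_prod => i _.
Qed.

Lemma adj_entries_in n (A : 'M[R]_n) : entries_in A -> entries_in (\adj A).
Proof.
move=> AS i j; rewrite mxE /cofactor rpredM ?rpred_sign //.
by apply: det_in => k l; rewrite !mxE.
Qed.

End EntriesInSubring.

Section LinearSystems.
Variable E : finType.
Local Notation series := (series E).
Local Notation entries_poly := (entries_in (@polys E)).

(* Cramer's rule: if g = b + M g where M, b, c are polynomial and M has no
   constant term, then every entry c g is rational, with denominator
   det(1 - M), whose constant term is det 1 = 1. *)
Lemma rational_linear_system n (M : 'M[series]_n) (b g : 'cV[series]_n)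
    (c : 'rV[series]_n) :
  entries_poly M -> map_mx (@const_coef E) M = 0 -> entries_poly b -> entries_poly c ->
  g = b + M *m g -> rational_series ((c *m g) 0 0).
Proof.
move=> M_polys M_const b_polys c_polys g_fix.
have IM_polys : entries_poly (1%:M - M).
  by move=> i j; rewrite !mxE rpredB ?rpred_nat.
have solve : (1%:M - M) *m g = b by rewrite mulmxBl mul1mx {1}g_fix addrK.
exists ((c *m (\adj (1%:M - M) *m b)) 0 0), (\det (1%:M - M)); split.
- by apply/polysP/mul_entries_in => //; apply/mul_entries_in/b_polys/adj_entries_in.
- exact/polysP/det_in.
- have const_one : map_mx (@const_coef E) (1%:M : 'M[series]_n) = 1%:M.
    by apply/matrixP => i j; rewrite !mxE rmorph_nat.
  rewrite -[X in X != 0]/(const_coef _) -det_map_mx map_mxB /= M_const subr0.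
  by rewrite const_one det1.
- have cleared :
      \det (1%:M - M) * (c *m g) 0 0 = (c *m (\adj (1%:M - M) *m b)) 0 0.
    by rewrite -solve (mulmxA (\adj _)) mul_adj_mx mul_scalar_mx -scalemxAr [RHS]mxE.
  by move=> m; rewrite -cleared.
Qed.

End LinearSystems.

Lemma sum_tuple_cons (T : finType) (V : nmodType) k (F : seq T -> V) :
  \sum_(t : k.+1.-tuple T) F t = \sum_(x : T) \sum_(t : k.-tuple T) F (x :: t).
Proof.
rewrite pair_bigA /=.
pose cons_tuple (p : T * k.-tuple T) := [tuple of p.1 :: p.2].
have cons_bij : {on [pred i | true], bijective cons_tuple}.
  exists (fun t : k.+1.-tuple T => (thead t, [tuple of behead t])) => [[x t] _|t _].
    by rewrite /cons_tuple /= theadE; congr (_, _); apply/val_inj.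
  by rewrite [in RHS](tuple_eta t); apply/val_inj.
by rewrite (reindex cons_tuple cons_bij).
Qed.

Section WordSeries.
Variable E : finType.
Local Notation mono := (mono E).
Local Notation series := (series E).

Definition wseries (F : seq E -> int) : series :=
  fun m => \sum_(t : (degm m).-tuple E | mult t == m) F t.

Lemma wseriesD (F G : seq E -> int) :
  wseries (fun s => F s + G s) = wseries F + wseries G.
Proof. by apply: boolp.funext => m; rewrite /wseries big_split. Qed.

Lemma wseriesZ (c : int) (F : seq E -> int) :
  wseries (fun s => c * F s) = c%:~R * wseries F.
Proof.
apply: boolp.funext => m; rewrite -[RHS]/(scoef m _) scoef_intM.
by rewrite /scoef /wseries mulr_sumr.
Qed.

Lemma wseries_sum (I : Type) (r : seq I) (F : I -> seq E -> int) :
  wseries (fun s => \sum_(i <- r) F i s) = \sum_(i <- r) wseries (F i).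
Proof.
apply: boolp.funext => m; rewrite -[RHS]/(scoef m _) raddf_sum.
by rewrite /scoef /wseries exchange_big.
Qed.

Lemma wseries_nil : wseries (fun s => (s == [::])%:R) = 1.
Proof.
apply: boolp.funext => m; rewrite -[RHS]/(scoef m 1) scoef1 /wseries.
case m_deg: (degm m) => [|k].
  rewrite big_mkcond (bigD1 [tuple]) //= big1 ?addr0 => [|t].
    by move/degm_eq0: m_deg => ->; rewrite (_ : mult [::] = mono0 E) ?eqxx.
  by rewrite (tuple0 t); case/eqP.
rewrite big1 => [|[[|x s] //]]; case: eqP m_deg => // ->.
by rewrite degm0.
Qed.

Definition prefixed (e : E) (F : seq E -> int) (s : seq E) : int :=
  if s is x :: t then (x == e)%:R * F t else 0.

Lemma mult_cons_eq (e : E) (t : seq E) (m : mono) :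
  (mult (e :: t) == m) = (0 < m e)%N && (mult t == msub m (delta e)).
Proof.
apply/eqP/andP => [<-|[m_pos /eqP t_mult]].
  by split; [rewrite ffunE /= eqxx | apply/eqP/ffunP => x; rewrite !ffunE /= eq_sym addKn].
apply/ffunP => x; have := congr1 (fun f : mono => f x) t_mult; rewrite !ffunE /= => ->.
have [<-|_] := eqVneq e x; last by rewrite subn0.
by rewrite add1n subn1 prednK.
Qed.

Lemma wseries_prefixed (e : E) (F : seq E -> int) :
  wseries (prefixed e F) = xvar e * wseries F.
Proof.
apply: boolp.funext => m; rewrite -[RHS]/(scoef m _) scoef_xvarM /wseries.
case m_deg: (degm m) => [|n].
  rewrite big1 => [|t _]; last by rewrite tuple0.
  by move/degm_eq0: m_deg => ->; rewrite ffunE.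
rewrite big_mkcond (sum_tuple_cons n (fun s => if mult s == m then prefixed e F s else 0)).
rewrite (bigD1 e) //= [X in _ + X]big1 ?addr0; last first.
  by move=> x /negbTE x_e; apply: big1 => t _; rewrite x_e mul0r; case: ifP.
under eq_bigr => t _ do rewrite eqxx mul1r mult_cons_eq.
case: ifP => [m_pos|_]; last by apply: big1.
rewrite /scoef degm_msub ?mle_delta // m_deg degm_delta subn1 /=.
by rewrite -big_mkcond.
Qed.

End WordSeries.

Section TransferWeights.
Variables (E : finType) (start : E -> int) (trans : E -> E -> int) (stop : E -> int).
Local Notation series := (series E).

Fixpoint tail_weight (x : E) (s : seq E) : int :=
  if s is y :: s' then trans x y * tail_weight y s' else stop x.

Definition word_weight (s : seq E) : int :=
  if s is x :: s' then start x * tail_weight x s' else 0.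

Definition from_series (e : E) : series := wseries (prefixed e (tail_weight e)).

Lemma tail_weight_split (e : E) (s : seq E) : tail_weight e s =
  stop e * (s == [::])%:R + \sum_e' trans e e' * prefixed e' (tail_weight e') s.
Proof.
case: s => [|y s] /=; first by rewrite big1 ?addr0 ?mulr1 // => e' _; rewrite mulr0.
rewrite mulr0 add0r (bigD1 y) //= eqxx mul1r big1 ?addr0 // => e' /negbTE y_e'.
by rewrite eq_sym y_e' mul0r mulr0.
Qed.

Lemma from_series_rec (e : E) : from_series e =
  xvar e * ((stop e)%:~R + \sum_e' (trans e e')%:~R * from_series e').
Proof.
rewrite /from_series wseries_prefixed (boolp.funext (tail_weight_split e)).
rewrite wseriesD wseriesZ wseries_nil mulr1 wseries_sum.
by under eq_bigr do rewrite wseriesZ.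
Qed.

Lemma word_weight_split (s : seq E) :
  word_weight s = \sum_e start e * prefixed e (tail_weight e) s.
Proof.
case: s => [|x s] /=; first by rewrite big1 // => e _; rewrite mulr0.
rewrite (bigD1 x) //= eqxx mul1r big1 ?addr0 // => e /negbTE x_e.
by rewrite eq_sym x_e mul0r mulr0.
Qed.

(* matrices are indexed by 'I_#|E| via enum_val *)
Lemma sum_enum_val (V : nmodType) (F : E -> V) :
  \sum_(i < #|E|) F (enum_val i) = \sum_e F e.
Proof. by rewrite -(big_enum_val F); apply: eq_bigl => e; rewrite inE. Qed.

Theorem word_series_rational : rational_series (wseries word_weight).
Proof.
pose g : 'cV[series]_#|E| := \col_i from_series (enum_val i).
pose M : 'M[series]_#|E| :=
  \matrix_(i, j) (xvar (enum_val i) * (trans (enum_val i) (enum_val j))%:~R).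
pose b : 'cV[series]_#|E| := \col_i (xvar (enum_val i) * (stop (enum_val i))%:~R).
pose c : 'rV[series]_#|E| := \row_i (start (enum_val i))%:~R.
have -> : wseries word_weight = (c *m g) 0 0.
  rewrite (boolp.funext word_weight_split) wseries_sum mxE -sum_enum_val.
  by apply: eq_bigr => i _; rewrite wseriesZ !mxE.
apply: (@rational_linear_system _ _ M b) => [i j|||i j|].
- by rewrite mxE rpredM ?xvar_polys ?rpred_int.
- by apply/matrixP => i j; rewrite !mxE rmorphM /= const_coef_xvar mul0r.
- by move=> i j; rewrite mxE rpredM ?xvar_polys ?rpred_int.
- by rewrite mxE rpred_int.
- apply/matrixP => i k; rewrite (ord1 k) !mxE from_series_rec mulrDr; congr (_ + _).
  rewrite -sum_enum_val mulr_sumr; apply: eq_bigr => j _.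
  by rewrite !mxE mulrA.
Qed.

End TransferWeights.

Section Turns.
Variables (R : realFieldType) (d : pt R).
Local Notation pt := (pt R).
Local Notation p0 := (pt0 R).

Definition turn (a b c : pt) : bool := in_cone (psub b a) (psub c b) d.

Fixpoint turns (l : seq pt) : nat :=
  if l is a :: l' then
    ((if l' is b :: c :: _ then turn a b c else false) + turns l')%N
  else 0%N.

Lemma turns_count (l : seq pt) : turns l =
  count (fun i => turn (nth p0 l i) (nth p0 l i.+1) (nth p0 l i.+2))
        (iota 0 (size l - 2)).
Proof.
elim: l => [|a l IHl] //; case: l IHl => [|b [|c l]] IHl //.
change (turns [:: a, b, c & l]) with (turn a b c + turns [:: b, c & l])%N.
rewrite IHl /= !subSS subn0 [iota 1 _](iotaDl 1 0) count_map.
by congr (_ + _)%N; apply: eq_count => i; rewrite /= add1n.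
Qed.

Lemma nth_cyclic (c : seq pt) j : (2 <= size c)%N -> (j < (size c).+2)%N ->
  nth p0 (c ++ take 2 c) j = nth p0 c (j %% size c).
Proof.
move=> c_ge2 j_lt; rewrite nth_cat; case: ltnP => [j_small|j_big].
  by rewrite modn_small.
rewrite nth_take; last by rewrite ltn_subLR // addn2.
rewrite -{2}(subnK j_big) modnDr modn_small //.
by rewrite ltn_subLR // (leq_trans j_lt) // -addn2 leq_add2l.
Qed.

(* closing the polygon c amounts to repeating its first two corners *)
Lemma concordance_turns (c : seq pt) : (2 <= size c)%N ->
  concordance d c = odd (turns (c ++ take 2 c)).
Proof.
move=> c_ge2; rewrite /concordance turns_count size_cat size_take.
rewrite (_ : (if 2 < size c then 2 else size c) = 2)%N; last first.
  by case: ltnP => // c_le2; apply/eqP; rewrite eqn_leq c_le2.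
rewrite addnK; congr odd; apply: eq_in_count => i.
rewrite mem_iota add0n => /andP[_ i_lt].
by rewrite /turn /pdir !nth_cyclic // ltnW // ltnW.
Qed.

(* turns are local: splitting a line only needs two points of overlap *)
Lemma turns_cat (a l : seq pt) : turns (a ++ l) = (turns (a ++ take 2 l) + turns l)%N.
Proof.
elim: a => [|x a IHa] /=; first by case: l => [|p [|q l]]; rewrite /= ?take0 ?addn0.
rewrite IHa addnA; congr (_ + _ + _)%N.
by case: a {IHa} => [|y [|z a]]; case: l => [|p [|q l]].
Qed.

End Turns.

Section PathSigns.
Variables (R : realFieldType) (V E : finType) (N : network R V E) (d : pt R) (u w : V).
Local Notation pt := (pt R).
Local Notation turns := (turns d).

Definition edge_body (e : E) : seq pt := pos N (src N e) :: route N e.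
Definition second_pt (e : E) : pt := nth (pt0 R) (edge_curve N e) 1.

Definition edge_turns (e : E) (z : pt) : nat := turns (edge_curve N e ++ [:: z]).
Definition junction_turns (e e' : E) : nat := edge_turns e (second_pt e').

Fixpoint walk_turns (e : E) (s : seq E) : nat :=
  if s is e' :: s' then (junction_turns e e' + walk_turns e' s')%N else 0%N.

Lemma turns_edge_body (e : E) (y : pt) (r : seq pt) :
  turns (edge_body e ++ pos N (tgt N e) :: y :: r) =
  (edge_turns e y + turns (pos N (tgt N e) :: y :: r))%N.
Proof.
by rewrite turns_cat /edge_turns /edge_curve /edge_body /= take0 cat_rcons.
Qed.

Lemma walk_drawing (e : E) (s : seq E) (Z : seq pt) : walk N (tgt N e) s w ->
  exists r, flatten [seq edge_body x | x <- e :: s] ++ pos N w :: Z =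
            pos N (src N e) :: second_pt e :: r.
Proof.
move=> walk_s.
have [r tail] : exists r,
    flatten [seq edge_body x | x <- s] ++ pos N w :: Z = pos N (tgt N e) :: r.
  case: s walk_s => [/eqP ->|x s /andP[/eqP <- _]] /=; first by exists Z.
  by rewrite /edge_body /=; eexists.
rewrite /= -catA tail /second_pt /edge_curve /edge_body /=.
by case: (route N e) => [|p rt] /=; eexists.
Qed.

Lemma turns_walk (e : E) (s : seq E) (z : pt) (Z : seq pt) : walk N (tgt N e) s w ->
  turns (flatten [seq edge_body x | x <- e :: s] ++ pos N w :: z :: Z) =
  (walk_turns e s + edge_turns (last e s) z + turns (pos N w :: z :: Z))%N.
Proof.
elim: s e => [|e' s IHs] e.
  move/eqP => tgt_e; change (flatten _) with (edge_body e ++ [::]).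
  by rewrite cats0 -tgt_e turns_edge_body.
case/andP => /eqP src_e' walk_s; have [r drawing] := walk_drawing (z :: Z) walk_s.
change (flatten _) with (edge_body e ++ flatten [seq edge_body x | x <- e' :: s]).
rewrite -catA drawing src_e' turns_edge_body -src_e' -drawing IHs //=.
by rewrite !addnA.
Qed.

Definition closing_head : pt := head (pos N u) (closing_pts N u w).

Definition closing_turns (e : E) : nat :=
  turns (pos N w :: closing_pts N u w ++ [:: pos N (src N e); second_pt e]).

Lemma path_concordance (e : E) (s : seq E) : src N e = u -> walk N (tgt N e) s w ->
  concordance d (CP N (e :: s) u w) =
  odd (walk_turns e s + edge_turns (last e s) closing_head + closing_turns e).
Proof.
move=> src_e walk_s; have [r drawing] := walk_drawing (closing_pts N u w) walk_s.
have -> : CP N (e :: s) u w =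
          flatten [seq edge_body x | x <- e :: s] ++ pos N w :: closing_pts N u w.
  by rewrite /CP /path_pts -catA.
rewrite concordance_turns; last by rewrite drawing.
have take2 :
    take 2 [:: pos N (src N e), second_pt e & r] = [:: pos N (src N e); second_pt e].
  by rewrite /= take0.
rewrite [X in take 2 X]drawing take2 -catA cat_cons.
have [z [Z closing]] : exists z Z,
    closing_pts N u w ++ [:: pos N (src N e); second_pt e] = z :: Z /\ z = closing_head.
  rewrite /closing_head.
  by case: (closing_pts N u w) => [|q c] /=; rewrite ?src_e; do 2 eexists.
case: closing => closing z_head.
by rewrite closing turns_walk // /closing_turns closing z_head.
Qed.

Definition sign_start (e : E) : int :=
  if src N e == u then - (-1) ^+ closing_turns e else 0.
Definition sign_trans (e e' : E) : int :=
  if tgt N e == src N e' then (-1) ^+ junction_turns e e' else 0.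
Definition sign_stop (e : E) : int :=
  if tgt N e == w then (-1) ^+ edge_turns e closing_head else 0.

Lemma tail_weight_signs (e : E) (s : seq E) : tail_weight sign_trans sign_stop e s =
  if walk N (tgt N e) s w
  then (-1) ^+ (walk_turns e s + edge_turns (last e s) closing_head) else 0.
Proof.
elim: s e => [|e' s IHs] e /=; first by rewrite /sign_stop add0n.
rewrite IHs /sign_trans eq_sym; case: (src N e' == tgt N e); last by rewrite mul0r.
by case: walk; rewrite ?mulr0 // -exprD addnA.
Qed.

Lemma word_weight_signs (P : seq E) :
  word_weight sign_start sign_trans sign_stop P =
  if is_path N P u w then path_sign N d P u w else 0.
Proof.
case: P => [|e s] //=; rewrite /sign_start tail_weight_signs /is_path /=.
case: eqP => [src_e|_] /=; last by rewrite mul0r.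
case: ifP => walk_s; last by rewrite mulr0.
rewrite /path_sign path_concordance // mulNr -exprD addnC -signr_odd.
by case: odd; rewrite ?expr1 ?expr0 ?opprK.
Qed.

Lemma bmeas_word_series :
  bmeas N d u w = wseries (word_weight sign_start sign_trans sign_stop).
Proof.
apply: boolp.funext => m; rewrite /bmeas /wseries big_mkcond [RHS]big_mkcond.
by apply: eq_bigr => P _; rewrite word_weight_signs; case: is_path; case: (mult P == m).
Qed.

End PathSigns.

Theorem proposition2p2 (R : realFieldType) (V E : finType) (N : network R V E)
  (HN : perfect_network N) (d : pt R) (Hd : generic_dir N d)
  (u w : V) (Hu : is_source N u) (Hw : is_sink N w) :
  rational_series (bmeas N d u w).
Proof. rewrite bmeas_word_series; exact: word_series_rational. Qed.
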